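(* There is an absolute constant $\delta_0>0$ such that the following holds. Let $0<\delta_1<\delta_0$ and $0<\delta_2<\delta_1^3$ with $\delta_1/\delta_2\in\mathbb{N}$, and let $m\in\mathbb{N}\cup\{\infty\}$. Partition $\mathbb{C}/\mathbb{Z}[i]$ into finitely many sets each of diameter at most $\delta_2$, and color each $x=(a_1,a_2,\dots)\in\ell^1(\mathbb{N}_{\le m};\mathbb{R}/\mathbb{Z})$ by the part containing $F(x)=\sum_{j}(e(a_j)-1)\bmod\mathbb{Z}[i]$. Then for all $x,s\in\ell^1(\mathbb{N}_{\le m};\mathbb{R}/\mathbb{Z})$ with $s\in S_m$, the elements $x$, $x+s$, $x+2s$ do not all receive the same color.
   Context: $\|x\|_{\mathbb{R}/\mathbb{Z}}$ is the distance from $x$ to the nearest integer; $e(x)=e^{2\pi i x}$ for $x\in\mathbb{R}/\mathbb{Z}$. For $m\in\mathbb{N}$, $\ell^1(\mathbb{N}_{\le m};\mathbb{R}/\mathbb{Z})$ is $(\mathbb{R}/\mathbb{Z})^m$ with norm $\sum_{i\le m}\|a_i\|_{\mathbb{R}/\mathbb{Z}}$; for $m=\infty$ it is the group $\ell^1(\mathbb{N};\mathbb{R}/\mathbb{Z})$ of sequences in $\mathbb{R}/\mathbb{Z}$ with $\sum_i\|a_i\|_{\mathbb{R}/\mathbb{Z}}<\infty$ (so the sum defining $F$ converges since $|e(a)-1|\le 2\pi\|a\|_{\mathbb{R}/\mathbb{Z}}$). Diameters in $\mathbb{C}/\mathbb{Z}[i]$ are with respect to the quotient metric. Let $\eta_m=2^{-100m}$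 for $m\in\mathbb{N}$ and $\eta_\infty=0$. $S_m$ is the set of $(a_1,a_2,\dots)\in\ell^1(\mathbb{N}_{\le m};\mathbb{R}/\mathbb{Z})$ for which there is an index $i$ with: (1) $a_i\in(-\delta_1-(2-\eta_m)\delta_2,\,-\delta_1+(2-\eta_m)\delta_2)\subset\mathbb{R}/\mathbb{Z}$; (2) for all $j\ne i$, $a_j\in(-(2-\eta_m)\delta_2,(2-\eta_m)\delta_2)\subset\mathbb{R}/\mathbb{Z}$; (3) $\delta_1-(2-\eta_m)\delta_2<\sum_{j\ne i}\|a_j\|_{\mathbb{R}/\mathbb{Z}}<\delta_1+(2-\eta_m)\delta_2$. *)

From Stdlib Require Import Reals Lra Lia ZArith.
From Coquelicot Require Import Coquelicot.
Open Scope R_scope.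

Definition nrmRZ (x : R) : R := Rmin (frac_part x) (1 - frac_part x).

(* Membership of (the class of) a in the image in R/Z of the real interval (u,v). *)
Definition inRZinterval (a u v : R) : Prop :=
  exists k : Z, u < a + IZR k < v.

(* m in N ∪ {∞}: [Some n] is n, [None] is ∞.  Coordinates are indexed by
   0,1,2,... ; index j is a genuine coordinate iff j < m. *)
Definition in_range (m : option nat) (j : nat) : Prop :=
  match m with Some n => (j < n)%nat | None => True end.

(* An element of l^1(N_{<=m}; R/Z), given by real representatives of its
   coordinates (coordinates beyond m are set to 0), with sum ||a_j|| < ∞. *)
Definition in_l1 (m : option nat) (a : nat -> R) : Prop :=
  (forall j, ~ in_range m j -> a j = 0) /\ ex_series (fun j => nrmRZ (a j)).

Definition eta (m : option nat) : R :=
  match m with Some n => / (2 ^ (100 * n)) | None => 0 end.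

Definition in_S (m : option nat) (d1 d2 : R) (a : nat -> R) : Prop :=
  let r := (2 - eta m) * d2 in
  exists i : nat, in_range m i /\
    inRZinterval (a i) (- d1 - r) (- d1 + r) /\
    (forall j, in_range m j -> j <> i -> inRZinterval (a j) (- r) r) /\
    d1 - r < Series (fun j => if Nat.eqb j i then 0 else nrmRZ (a j)) < d1 + r.

(* F(x) = sum_j (e(a_j) - 1) in C, written as (real part, imaginary part). *)
Definition F_re (a : nat -> R) : R := Series (fun j => cos (2 * PI * a j) - 1).
Definition F_im (a : nat -> R) : R := Series (fun j => sin (2 * PI * a j)).

(* Quotient metric on C/Z[i] = inf_{λ∈Z[i]} |z - w - λ|, computed coordinatewise. *)
Definition distCZ (x1 y1 x2 y2 : R) : R :=
  sqrt (nrmRZ (x1 - x2) ^ 2 + nrmRZ (y1 - y2) ^ 2).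

Definition seq_add (a b : nat -> R) : nat -> R := fun j => a j + b j.
Definition seq_scale (k : R) (a : nat -> R) : nat -> R := fun j => k * a j.

(* Suppose x, x + s, x + 2s had the same colour. Then F(x), F(x + s), F(x + 2s) lie
   within δ₂ of one another modulo Z[i], so both coordinates of the second difference
   D = F(x) - 2 F(x + s) + F(x + 2s) are within 3δ₂ of integers. Termwise
   e(a) - 2 e(a + b) + e(a + 2b) = -4 sin²(πb) e(a + b), hence |D| ≤ 2π² Σ ‖s_j‖ = O(δ₁),
   so those integers vanish. Rotate D by e(-(x_i + s_i)), i being the distinguished
   index of s ∈ S_m: the real part becomes -4 sin²(π s_i) ≈ -4π²δ₁² plus terms bounded
   by 4π² (2δ₂) ‖s_j‖, which sum to O(δ₁δ₂). Since δ₂ < δ₁³ this is far below the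
   lower bound -6δ₂. *)

From Stdlib Require Import Reals ZArith Lra Lia.
From Coquelicot Require Import Coquelicot.
Open Scope R_scope.

Lemma nrmRZ_attained (a : R) : exists k : Z, Rabs (a + IZR k) = nrmRZ a.
Proof.
  unfold nrmRZ, frac_part; pose proof (base_fp a) as [h0 h1]; unfold frac_part in *.
  destruct (Rle_dec (a - IZR (Int_part a)) (1 - (a - IZR (Int_part a)))).
  - exists (- Int_part a)%Z; rewrite opp_IZR, Rmin_left, Rabs_right; lra.
  - exists (- Int_part a - 1)%Z; rewrite minus_IZR, opp_IZR, Rmin_right, Rabs_left1; lra.
Qed.

Lemma nrmRZ_le_Rabs (a : R) (k : Z) : nrmRZ a <= Rabs (a + IZR k).
Proof.
  unfold nrmRZ, frac_part; pose proof (base_fp a) as [h0 h1]; unfold frac_part in *.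
  destruct (Z_le_gt_dec 0 (Int_part a + k)) as [h | h];
    [apply IZR_le in h | assert (IZR (Int_part a + k) <= -1) by (apply IZR_le; lia)];
    rewrite plus_IZR in *.
  - rewrite Rabs_right by lra; eapply Rle_trans; [apply Rmin_l | lra].
  - rewrite Rabs_left1 by lra; eapply Rle_trans; [apply Rmin_r | lra].
Qed.

Lemma nrmRZ_bounds (a : R) : 0 <= nrmRZ a <= 1/2.
Proof. unfold nrmRZ, Rmin; pose proof (base_fp a); destruct Rle_dec; lra. Qed.

Lemma nrmRZ_0 : nrmRZ 0 = 0.
Proof.
  pose proof (nrmRZ_le_Rabs 0 0); pose proof (nrmRZ_bounds 0).
  rewrite Rplus_0_r, Rabs_R0 in *; lra.
Qed.

Lemma nrmRZ_opp (a : R) : nrmRZ (- a) = nrmRZ a.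
Proof.
  assert (hle : forall b, nrmRZ (- b) <= nrmRZ b).
  { intros b; destruct (nrmRZ_attained b) as [k <-].
    eapply Rle_trans; [apply (nrmRZ_le_Rabs _ (- k)) | rewrite opp_IZR].
    rewrite <- Ropp_plus_distr, Rabs_Ropp; lra. }
  pose proof (hle a); pose proof (hle (- a)); rewrite Ropp_involutive in *; lra.
Qed.

Lemma nrmRZ_triang (a b : R) : nrmRZ (a + b) <= nrmRZ a + nrmRZ b.
Proof.
  destruct (nrmRZ_attained a) as [k <-], (nrmRZ_attained b) as [l <-].
  eapply Rle_trans; [apply (nrmRZ_le_Rabs _ (k + l)) | rewrite plus_IZR].
  replace (a + b + (IZR k + IZR l)) with ((a + IZR k) + (b + IZR l)) by ring.
  apply Rabs_triang.
Qed.

Lemma nrmRZ_lt_of_inRZinterval (a r : R) : inRZinterval a (- r) r -> nrmRZ a < r.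
Proof.
  intros [k hk]; apply Rle_lt_trans with (1 := nrmRZ_le_Rabs a k).
  apply Rabs_def1; lra.
Qed.

Lemma Rabs_le_of_nrmRZ_le (a d : R) : nrmRZ a <= d -> Rabs a + d < 1 -> Rabs a <= d.
Proof.
  intros ha hsmall; destruct (nrmRZ_attained a) as [k hk].
  assert (hk0 : k = 0%Z).
  { assert (hk1 : Rabs (IZR k) < 1).
    { replace (IZR k) with ((a + IZR k) - a) by ring.
      eapply Rle_lt_trans; [apply Rabs_triang | rewrite Rabs_Ropp; lra]. }
    rewrite Rabs_Zabs in hk1; apply lt_IZR in hk1; lia. }
  subst k; rewrite Rplus_0_r in hk; lra.
Qed.

Lemma nrmRZ_le_distCZ_re (u v u' v' : R) : nrmRZ (u - u') <= distCZ u v u' v'.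
Proof.
  unfold distCZ; rewrite <- (sqrt_pow2 (nrmRZ (u - u'))) at 1 by apply nrmRZ_bounds.
  apply sqrt_le_1_alt; pose proof (pow2_ge_0 (nrmRZ (v - v'))); lra.
Qed.

Lemma nrmRZ_le_distCZ_im (u v u' v' : R) : nrmRZ (v - v') <= distCZ u v u' v'.
Proof.
  unfold distCZ; rewrite <- (sqrt_pow2 (nrmRZ (v - v'))) at 1 by apply nrmRZ_bounds.
  apply sqrt_le_1_alt; pose proof (pow2_ge_0 (nrmRZ (u - u'))); lra.
Qed.

Lemma Rabs_second_diff_le_of_nrmRZ (y0 y1 y2 d : R) :
  nrmRZ (y0 - y1) <= d -> nrmRZ (y0 - y2) <= d ->
  Rabs (y0 - 2 * y1 + y2) + 3 * d < 1 -> Rabs (y0 - 2 * y1 + y2) <= 3 * d.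
Proof.
  intros h1 h2; apply Rabs_le_of_nrmRZ_le.
  replace (y0 - 2 * y1 + y2) with ((y0 - y1) + (y0 - y1) + - (y0 - y2)) by ring.
  pose proof (nrmRZ_triang (y0 - y1 + (y0 - y1)) (- (y0 - y2))).
  pose proof (nrmRZ_triang (y0 - y1) (y0 - y1)).
  rewrite nrmRZ_opp in *; lra.
Qed.

Lemma PI_bounds : 3 < PI <= 4.
Proof. pose proof PI2_3_2; pose proof PI_4; lra. Qed.

Lemma Rabs_sin_le (x : R) : Rabs (sin x) <= Rabs x.
Proof.
  assert (hpos : forall y, 0 <= y -> Rabs (sin y) <= y).
  { intros y hy; pose proof PI_bounds; pose proof (SIN_bound y).
    destruct (Req_dec y 0) as [-> | hy0]; [rewrite sin_0, Rabs_R0; lra |].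
    pose proof (sin_lt_x y ltac:(lra)).
    destruct (Rle_dec y 1).
    - rewrite Rabs_right; [lra | apply Rle_ge, sin_ge_0; lra].
    - apply Rabs_le; lra. }
  destruct (Rle_dec 0 x).
  - rewrite (Rabs_right x) by lra; auto.
  - rewrite <- (Ropp_involutive x), sin_neg, !Rabs_Ropp, (Rabs_left x) by lra.
    apply hpos; lra.
Qed.

Lemma Rabs_sin_add_IZR_PI (x : R) (k : Z) : Rabs (sin (x + IZR k * PI)) = Rabs (sin x).
Proof.
  assert (hs : sin (IZR k * PI) = 0) by (apply sin_eq_0_1; eauto).
  assert (hc : Rabs (cos (IZR k * PI)) = 1).
  { pose proof (sin2_cos2 (IZR k * PI)) as h; rewrite hs in h; unfold Rsqr in h.
    pose proof (Rabs_pos (cos (IZR k * PI))).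
    assert (Rabs (cos (IZR k * PI)) ^ 2 = 1) by (rewrite pow2_abs; nra).
    nra. }
  rewrite sin_plus, hs, Rmult_0_r, Rplus_0_r, Rabs_mult, hc; ring.
Qed.

Lemma Rabs_sin_PI_le (a : R) : Rabs (sin (PI * a)) <= PI * nrmRZ a.
Proof.
  destruct (nrmRZ_attained a) as [k <-]; pose proof PI_bounds.
  rewrite <- (Rabs_sin_add_IZR_PI _ k).
  replace (PI * a + IZR k * PI) with (PI * (a + IZR k)) by ring.
  eapply Rle_trans; [apply Rabs_sin_le |].
  rewrite Rabs_mult, (Rabs_right PI) by lra; lra.
Qed.

Lemma sin_PI_sqr_le (a r : R) : nrmRZ a <= r -> sin (PI * a) ^ 2 <= PI ^ 2 * r * nrmRZ a.
Proof.
  intros hr; pose proof (Rabs_sin_PI_le a); pose proof (nrmRZ_bounds a); pose proof PI_bounds.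
  rewrite <- pow2_abs; pose proof (Rabs_pos (sin (PI * a))).
  apply Rle_trans with ((PI * nrmRZ a) ^ 2); [apply pow_incr; lra |].
  replace ((PI * nrmRZ a) ^ 2) with (PI ^ 2 * (nrmRZ a * nrmRZ a)) by ring.
  rewrite Rmult_assoc; apply Rmult_le_compat_l; [apply pow2_ge_0 | nra].
Qed.

Lemma Rabs_cos_2PI_sub1_le (a : R) : Rabs (cos (2 * PI * a) - 1) <= PI ^ 2 * nrmRZ a.
Proof.
  replace (2 * PI * a) with (2 * (PI * a)) by ring; rewrite cos_2a_sin.
  pose proof (sin_PI_sqr_le a (1/2) (proj2 (nrmRZ_bounds a))).
  pose proof (pow2_ge_0 (sin (PI * a))).
  rewrite Rabs_left1; simpl in *; lra.
Qed.

Lemma Rabs_sin_2PI_le (a : R) : Rabs (sin (2 * PI * a)) <= 2 * PI * nrmRZ a.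
Proof.
  replace (2 * PI * a) with (2 * (PI * a)) by ring; rewrite sin_2a.
  pose proof (Rabs_sin_PI_le a); pose proof (Rabs_pos (sin (PI * a))).
  assert (Rabs (cos (PI * a)) <= 1) by apply Rabs_le, COS_bound.
  rewrite !Rabs_mult, Rabs_right by lra.
  pose proof (Rabs_pos (cos (PI * a))); nra.
Qed.

Lemma sin_PI_ge (t : R) : 0 <= t <= 1/10 -> 2 * t <= sin (PI * t).
Proof.
  intros ht; pose proof PI_bounds.
  destruct (sin_bound (PI * t) 0) as [h _]; [nra | nra |].
  unfold sin_approx, sin_term in h; simpl in h.
  set (u := PI * t) in *.
  assert (hu : 3 * t <= u <= 2/5) by (unfold u; nra).
  assert (u * (u * (u * 1)) <= u * (4/25)) by nra.
  lra.
Qed.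

Lemma is_series_single (i : nat) (c : R) : is_series (fun j => if Nat.eqb j i then c else 0) c.
Proof.
  assert (hsum : forall n, (i <= n)%nat -> sum_n (fun j => if Nat.eqb j i then c else 0) n = c).
  { assert (hlow : forall n, (n < i)%nat -> sum_n (fun j => if Nat.eqb j i then c else 0) n = 0).
    { induction n as [| n IH]; intros hn.
      - rewrite sum_O; destruct (Nat.eqb_spec 0 i); [lia | reflexivity].
      - rewrite sum_Sn, IH by lia; destruct (Nat.eqb_spec (S n) i); [lia |].
        apply Rplus_0_l. }
    induction n as [| n IH]; intros hn.
    - rewrite sum_O; destruct (Nat.eqb_spec 0 i); [reflexivity | lia].
    - rewrite sum_Sn; destruct (Nat.eqb_spec (S n) i) as [<- | hne].
      + rewrite hlow by lia; apply Rplus_0_l.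
      + rewrite IH by lia; apply Rplus_0_r. }
  apply filterlim_ext_loc with (fun _ => c); [exists i; intros n hn; symmetry; auto |].
  apply filterlim_const.
Qed.

(* [ex_series_le] at type [R]: its normed-module structure cannot be inferred from an
   [ex_series] goal on [R]. *)
Lemma ex_series_Rabs_le (a b : nat -> R) :
  (forall n, Rabs (a n) <= b n) -> ex_series b -> ex_series a.
Proof. exact (ex_series_le a b). Qed.

Lemma Series_remove_term (f : nat -> R) (i : nat) : ex_series f ->
  ex_series (fun j => if Nat.eqb j i then 0 else f j) /\
  Series f = f i + Series (fun j => if Nat.eqb j i then 0 else f j).
Proof.
  intros hf; pose proof (is_series_single i (f i)) as hi.
  assert (hoff : forall j, f j - (if Nat.eqb j i then f i else 0) = if Nat.eqb j i then 0 else f j).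
  { intros j; destruct (Nat.eqb_spec j i) as [-> | _]; ring. }
  assert (hex : ex_series (fun j => f j - (if Nat.eqb j i then f i else 0))).
  { apply (ex_series_minus f); [exact hf | eexists; exact hi]. }
  split; [exact (ex_series_ext _ _ hoff hex) |].
  rewrite <- (Series_ext _ _ hoff), Series_minus by (auto; eexists; exact hi).
  assert (Series (fun j => if Nat.eqb j i then f i else 0) = f i)
    by exact (is_series_unique _ _ hi).
  lra.
Qed.

Lemma Series_monotone (a b : nat -> R) :
  (forall n, a n <= b n) -> ex_series a -> ex_series b -> Series a <= Series b.
Proof.
  intros hab ha hb.
  assert (h : Series (fun n => 0 * a n) <= Series (fun n => b n - a n)).
  { apply Series_le; [intros n; specialize (hab n); lra | apply (ex_series_minus b a); auto]. }
  rewrite Series_scal_l, Series_minus in h by auto; lra.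
Qed.

Lemma Rabs_Series_le (a b : nat -> R) :
  (forall n, Rabs (a n) <= b n) -> ex_series b -> Rabs (Series a) <= Series b.
Proof.
  intros hab hb.
  assert (habs : ex_series (fun n => Rabs (a n))).
  { apply (ex_series_Rabs_le _ b); [intros n; rewrite Rabs_Rabsolu; apply hab | exact hb]. }
  eapply Rle_trans; [apply Series_Rabs, habs |].
  apply Series_le; [intros n; split; [apply Rabs_pos | apply hab] | exact hb].
Qed.

Lemma Series_second_diff (a0 a1 a2 : nat -> R) :
  ex_series a0 -> ex_series a1 -> ex_series a2 ->
  Series a0 - 2 * Series a1 + Series a2 = Series (fun j => a0 j - 2 * a1 j + a2 j).
Proof.
  intros h0 h1 h2.
  assert (h1' : ex_series (fun j => 2 * a1 j)) by exact (ex_series_scal_l 2 a1 h1).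
  rewrite Series_plus, Series_minus, Series_scal_l; auto.
  exact (ex_series_minus a0 _ h0 h1').
Qed.

Lemma ex_series_nrmRZ_add (a b : nat -> R) :
  ex_series (fun j => nrmRZ (a j)) -> ex_series (fun j => nrmRZ (b j)) ->
  ex_series (fun j => nrmRZ (a j + b j)).
Proof.
  intros ha hb; apply (ex_series_Rabs_le _ (fun j => nrmRZ (a j) + nrmRZ (b j))).
  - intros j; apply Rle_trans with (2 := nrmRZ_triang (a j) (b j)).
    right; apply Rabs_right, Rle_ge, nrmRZ_bounds.
  - exact (ex_series_plus _ _ ha hb).
Qed.

Lemma ex_series_cos_2PI_sub1 (a : nat -> R) : ex_series (fun j => nrmRZ (a j)) ->
  ex_series (fun j => cos (2 * PI * a j) - 1).
Proof.
  intros ha; apply (ex_series_Rabs_le _ (fun j => PI ^ 2 * nrmRZ (a j))).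
  - intros j; apply Rabs_cos_2PI_sub1_le.
  - exact (ex_series_scal_l _ _ ha).
Qed.

Lemma ex_series_sin_2PI (a : nat -> R) : ex_series (fun j => nrmRZ (a j)) ->
  ex_series (fun j => sin (2 * PI * a j)).
Proof.
  intros ha; apply (ex_series_Rabs_le _ (fun j => 2 * PI * nrmRZ (a j))).
  - intros j; apply Rabs_sin_2PI_le.
  - exact (ex_series_scal_l _ _ ha).
Qed.

Lemma cos_second_diff (a b : R) :
  (cos (2 * PI * a) - 1) - 2 * (cos (2 * PI * (a + b)) - 1) + (cos (2 * PI * (a + 2 * b)) - 1)
  = -4 * sin (PI * b) ^ 2 * cos (2 * PI * (a + b)).
Proof.
  replace (2 * PI * a) with (2 * PI * (a + b) - 2 * (PI * b)) by ring.
  replace (2 * PI * (a + 2 * b)) with (2 * PI * (a + b) + 2 * (PI * b)) by ring.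
  rewrite cos_minus, cos_plus, cos_2a_sin, sin_2a; ring.
Qed.

Lemma sin_second_diff (a b : R) :
  sin (2 * PI * a) - 2 * sin (2 * PI * (a + b)) + sin (2 * PI * (a + 2 * b))
  = -4 * sin (PI * b) ^ 2 * sin (2 * PI * (a + b)).
Proof.
  replace (2 * PI * a) with (2 * PI * (a + b) - 2 * (PI * b)) by ring.
  replace (2 * PI * (a + 2 * b)) with (2 * PI * (a + b) + 2 * (PI * b)) by ring.
  rewrite sin_minus, sin_plus, cos_2a_sin, sin_2a; ring.
Qed.

Lemma Rabs_sin_PI_sqr_mul_le (b c r : R) : Rabs c <= 1 -> nrmRZ b <= r ->
  Rabs (-4 * sin (PI * b) ^ 2 * c) <= 4 * PI ^ 2 * r * nrmRZ b.
Proof.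
  intros hc hb; pose proof (sin_PI_sqr_le b r hb); pose proof (pow2_ge_0 (sin (PI * b))).
  rewrite !Rabs_mult, Rabs_left, Rabs_right by lra.
  pose proof (Rabs_pos c); nra.
Qed.

Definition second_diff (G : (nat -> R) -> R) (x s : nat -> R) : R :=
  G x - 2 * G (seq_add x s) + G (seq_add x (seq_scale 2 s)).

Section SecondDifference.

Variables x s : nat -> R.
Hypothesis hx : ex_series (fun j => nrmRZ (x j)).
Hypothesis hs : ex_series (fun j => nrmRZ (s j)).

Lemma ex_series_sin_PI_sqr_mul (c : nat -> R) : (forall j, Rabs (c j) <= 1) ->
  ex_series (fun j => -4 * sin (PI * s j) ^ 2 * c j).
Proof.
  intros hc; apply (ex_series_Rabs_le _ (fun j => 4 * PI ^ 2 * (1/2) * nrmRZ (s j))).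
  - intros j; apply Rabs_sin_PI_sqr_mul_le; [apply hc | apply nrmRZ_bounds].
  - exact (ex_series_scal_l _ _ hs).
Qed.

Let hxs : ex_series (fun j => nrmRZ (x j + s j)) := ex_series_nrmRZ_add x s hx hs.
Let hx2s : ex_series (fun j => nrmRZ (x j + 2 * s j)).
Proof.
  apply (ex_series_ext (fun j => nrmRZ (x j + s j + s j))); [intros j; f_equal; ring |].
  exact (ex_series_nrmRZ_add _ s hxs hs).
Qed.

Lemma F_re_second_diff : second_diff F_re x s =
  Series (fun j => -4 * sin (PI * s j) ^ 2 * cos (2 * PI * (x j + s j))).
Proof.
  unfold second_diff, F_re, seq_add, seq_scale.
  rewrite Series_second_diff; [apply Series_ext; intros j; apply cos_second_diff | ..];
    apply ex_series_cos_2PI_sub1; [exact hx | exact hxs | exact hx2s].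
Qed.

Lemma F_im_second_diff : second_diff F_im x s =
  Series (fun j => -4 * sin (PI * s j) ^ 2 * sin (2 * PI * (x j + s j))).
Proof.
  unfold second_diff, F_im, seq_add, seq_scale.
  rewrite Series_second_diff; [apply Series_ext; intros j; apply sin_second_diff | ..];
    apply ex_series_sin_2PI; [exact hx | exact hxs | exact hx2s].
Qed.

Lemma Rabs_Series_sin_PI_sqr_mul_le (c : nat -> R) : (forall j, Rabs (c j) <= 1) ->
  Rabs (Series (fun j => -4 * sin (PI * s j) ^ 2 * c j)) <= 2 * PI ^ 2 * Series (fun j => nrmRZ (s j)).
Proof.
  intros hc; replace (2 * PI ^ 2) with (4 * PI ^ 2 * (1/2)) by field.
  rewrite <- Series_scal_l; apply Rabs_Series_le; [| exact (ex_series_scal_l _ _ hs)].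
  intros j; apply Rabs_sin_PI_sqr_mul_le; [apply hc | apply nrmRZ_bounds].
Qed.

Lemma Series_sin_PI_sqr_mul_le (c : nat -> R) (i : nat) (r : R) :
  (forall j, Rabs (c j) <= 1) -> c i = 1 -> (forall j, j <> i -> nrmRZ (s j) <= r) ->
  Series (fun j => -4 * sin (PI * s j) ^ 2 * c j) <=
  -4 * sin (PI * s i) ^ 2 + 4 * PI ^ 2 * r * Series (fun j => if Nat.eqb j i then 0 else nrmRZ (s j)).
Proof.
  intros hc hci hr.
  destruct (Series_remove_term _ i (ex_series_sin_PI_sqr_mul c hc)) as [hP ->].
  destruct (Series_remove_term _ i hs) as [hoff _].
  rewrite hci, Rmult_1_r, <- Series_scal_l; apply Rplus_le_compat_l, Series_monotone;
    [| exact hP | exact (ex_series_scal_l _ _ hoff)].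
  intros j; destruct (Nat.eqb_spec j i) as [_ | hji]; [lra |].
  eapply Rle_trans; [apply Rle_abs | apply Rabs_sin_PI_sqr_mul_le; auto].
Qed.

Let Rabs_cos_le_1 (j : nat) : Rabs (cos (2 * PI * (x j + s j))) <= 1 :=
  Rabs_le _ _ (COS_bound _).
Let Rabs_sin_le_1 (j : nat) : Rabs (sin (2 * PI * (x j + s j))) <= 1 :=
  Rabs_le _ _ (SIN_bound _).

Lemma rotated_second_diff (theta : R) :
  cos theta * second_diff F_re x s + sin theta * second_diff F_im x s =
  Series (fun j => -4 * sin (PI * s j) ^ 2 * cos (2 * PI * (x j + s j) - theta)).
Proof.
  rewrite F_re_second_diff, F_im_second_diff, <- !Series_scal_l, <- Series_plus;
    [| exact (ex_series_scal_l _ _ (ex_series_sin_PI_sqr_mul _ Rabs_cos_le_1))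
     | exact (ex_series_scal_l _ _ (ex_series_sin_PI_sqr_mul _ Rabs_sin_le_1))].
  apply Series_ext; intros j; rewrite cos_minus; ring.
Qed.

Lemma rotated_second_diff_ge (d theta : R) :
  distCZ (F_re x) (F_im x) (F_re (seq_add x s)) (F_im (seq_add x s)) <= d ->
  distCZ (F_re x) (F_im x) (F_re (seq_add x (seq_scale 2 s))) (F_im (seq_add x (seq_scale 2 s))) <= d ->
  2 * PI ^ 2 * Series (fun j => nrmRZ (s j)) + 3 * d < 1 ->
  - (6 * d) <= Series (fun j => -4 * sin (PI * s j) ^ 2 * cos (2 * PI * (x j + s j) - theta)).
Proof.
  intros h1 h2 hsmall.
  assert (hre : Rabs (second_diff F_re x s) <= 3 * d).
  { pose proof (Rabs_Series_sin_PI_sqr_mul_le _ Rabs_cos_le_1).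
    apply Rabs_second_diff_le_of_nrmRZ;
      [eapply Rle_trans; [apply nrmRZ_le_distCZ_re | exact h1]
      |eapply Rle_trans; [apply nrmRZ_le_distCZ_re | exact h2]
      |change (Rabs (second_diff F_re x s) + 3 * d < 1); rewrite F_re_second_diff; lra]. }
  assert (him : Rabs (second_diff F_im x s) <= 3 * d).
  { pose proof (Rabs_Series_sin_PI_sqr_mul_le _ Rabs_sin_le_1).
    apply Rabs_second_diff_le_of_nrmRZ;
      [eapply Rle_trans; [apply nrmRZ_le_distCZ_im | exact h1]
      |eapply Rle_trans; [apply nrmRZ_le_distCZ_im | exact h2]
      |change (Rabs (second_diff F_im x s) + 3 * d < 1); rewrite F_im_second_diff; lra]. }
  rewrite <- rotated_second_diff.
  pose proof (COS_bound theta); pose proof (SIN_bound theta).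
  apply Rabs_le_between in hre, him; nra.
Qed.

End SecondDifference.

Lemma eta_bounds (m : option nat) : 0 <= eta m <= 1.
Proof.
  destruct m as [n |]; unfold eta; [| lra].
  pose proof (pow_R1_Rle 2 (100 * n) ltac:(lra)).
  split; [left; apply Rinv_0_lt_compat; lra |].
  rewrite <- Rinv_1; apply Rinv_le_contravar; lra.
Qed.

Lemma in_range_dec (m : option nat) (j : nat) : {in_range m j} + {~ in_range m j}.
Proof. destruct m as [n |]; [apply lt_dec | left; exact I]. Qed.

Lemma nrmRZ_le_off_center (m : option nat) (s : nat -> R) (i : nat) (r : R) : 0 <= r ->
  (forall j, ~ in_range m j -> s j = 0) ->
  (forall j, in_range m j -> j <> i -> inRZinterval (s j) (- r) r) ->
  forall j, j <> i -> nrmRZ (s j) <= r.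
Proof.
  intros hr hout hin j hji; destruct (in_range_dec m j) as [hj | hj].
  - left; exact (nrmRZ_lt_of_inRZinterval _ _ (hin j hj hji)).
  - rewrite (hout j hj), nrmRZ_0; exact hr.
Qed.

Lemma four_sqr_le_sin_PI_sqr (a : R) (k : Z) :
  Rabs (a + IZR k) <= 1/10 -> 4 * (a + IZR k) ^ 2 <= sin (PI * a) ^ 2.
Proof.
  intros hk; rewrite <- (pow2_abs (sin _)), <- (Rabs_sin_add_IZR_PI _ k).
  replace (PI * a + IZR k * PI) with (PI * (a + IZR k)) by ring.
  set (y := a + IZR k) in *.
  assert (hy : 2 * Rabs y <= Rabs (sin (PI * y))).
  { destruct (Rle_dec 0 y).
    - rewrite Rabs_right in * by lra.
      eapply Rle_trans; [apply sin_PI_ge; lra | apply Rle_abs].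
    - rewrite Rabs_left in * by lra.
      replace (PI * y) with (- (PI * - y)) by ring; rewrite sin_neg, Rabs_Ropp.
      eapply Rle_trans; [apply sin_PI_ge; lra | apply Rle_abs]. }
  replace (4 * y ^ 2) with ((2 * Rabs y) ^ 2) by (rewrite <- (pow2_abs y); ring).
  apply pow_incr; pose proof (Rabs_pos y); lra.
Qed.

Section SmallParameters.

Variables d1 d2 r : R.
Hypothesis hd1 : 0 < d1 < 1/100.
Hypothesis hd2 : 0 < d2 < d1 ^ 3.
Hypothesis hr : d2 <= r <= 2 * d2.

Lemma small_r_lt : r < d1 / 5000.
Proof. assert (d1 ^ 3 < d1 / 10000) by (assert (d1 * d1 < 1/10000) by nra; simpl; nra); lra. Qed.

Lemma small_second_diff_budget (sigma : R) :
  0 <= sigma < 2 * (d1 + r) -> 2 * PI ^ 2 * sigma + 3 * d2 < 1.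
Proof. intros; pose proof small_r_lt; pose proof PI_bounds; assert (PI ^ 2 <= 16) by nra; nra. Qed.

Lemma error_lt_main_term (t : R) :
  d1 - r < t -> 6 * d2 + 4 * PI ^ 2 * r * (d1 + r) < 16 * t ^ 2.
Proof.
  intros ht; pose proof small_r_lt; pose proof PI_bounds.
  assert (PI ^ 2 <= 16) by nra.
  assert (d1 * (9/10) <= t) by lra.
  assert (r * (d1 + r) <= d1 * d1 / 2000) by nra.
  assert (4 * PI ^ 2 * r * (d1 + r) <= 64 * (d1 * d1 / 2000)) by nra.
  assert (d1 * d1 * (81/100) <= t ^ 2) by nra.
  nra.
Qed.

End SmallParameters.

Theorem mainTheorem4 :
  exists delta0 : R, 0 < delta0 /\
  forall (d1 d2 : R),
    0 < d1 < delta0 ->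
    0 < d2 < d1 ^ 3 ->
    (exists n : nat, d1 / d2 = INR n) ->
    forall (m : option nat)
      (col : R -> R -> nat),
      (* finitely many parts *)
      (exists K : nat, forall u v, (col u v < K)%nat) ->
      (* col is a function on C/Z[i] *)
      (forall (u v : R) (p q : Z), col (u + IZR p) (v + IZR q) = col u v) ->
      (* each part has diameter at most d2 *)
      (forall u v u' v', col u v = col u' v' -> distCZ u v u' v' <= d2) ->
      forall x s : nat -> R,
        in_l1 m x -> in_l1 m s -> in_S m d1 d2 s ->
        ~ (col (F_re x) (F_im x) = col (F_re (seq_add x s)) (F_im (seq_add x s)) /\
           col (F_re x) (F_im x) =
             col (F_re (seq_add x (seq_scale 2 s))) (F_im (seq_add x (seq_scale 2 s)))).
Proof.
  exists (1/100); split; [lra |].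
  intros d1 d2 hd1 hd2 _ m col _ _ hdiam x s [_ hx] [hs0 hs] hS [hc1 hc2].
  destruct hS as [i [_ [[k hk] [hin hrest]]]].
  set (r := (2 - eta m) * d2) in *.
  assert (hr : d2 <= r <= 2 * d2) by (pose proof (eta_bounds m); unfold r; nra).
  pose proof (small_r_lt d1 d2 r hd1 hd2 hr).
  assert (hoff : forall j, j <> i -> nrmRZ (s j) <= r)
    by (apply (nrmRZ_le_off_center m); auto; lra).
  assert (htotal : 0 <= Series (fun j => nrmRZ (s j)) < 2 * (d1 + r)).
  { destruct (Series_remove_term _ i hs) as [_ ->].
    pose proof (nrmRZ_le_Rabs (s i) k); pose proof (nrmRZ_bounds (s i)).
    assert (Rabs (s i + IZR k) < d1 + r) by (apply Rabs_def1; lra).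
    split; lra. }
  set (theta := 2 * PI * (x i + s i)).
  set (c := fun j => cos (2 * PI * (x j + s j) - theta)).
  assert (hphase : c i = 1) by (unfold c, theta; rewrite Rminus_diag; apply cos_0).
  pose proof (rotated_second_diff_ge x s hx hs d2 theta (hdiam _ _ _ _ hc1) (hdiam _ _ _ _ hc2)
    (small_second_diff_budget d1 d2 r hd1 hd2 hr _ htotal)) as hlow.
  pose proof (Series_sin_PI_sqr_mul_le s hs c i r
    (fun j => Rabs_le _ _ (COS_bound _)) hphase hoff) as hup.
  unfold c in hup; cbv beta in hup.
  pose proof (four_sqr_le_sin_PI_sqr (s i) k ltac:(apply Rabs_le; lra)) as hmain.
  pose proof (error_lt_main_term d1 d2 r hd1 hd2 hr (- (s i + IZR k)) ltac:(lra)) as herr.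
  assert (4 * PI ^ 2 * r * Series (fun j => if Nat.eqb j i then 0 else nrmRZ (s j))
          <= 4 * PI ^ 2 * r * (d1 + r)) by (apply Rmult_le_compat_l; [nra | lra]).
  replace ((- (s i + IZR k)) ^ 2) with ((s i + IZR k) ^ 2) in herr by ring.
  lra.
Qed.
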